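(* Let $\lambda,\mu\in\mathcal{A}_{k,n}$ and $\nu\in\mathcal{P}_k^+$, and let $\check\nu\in\mathcal{A}_{k,n}$ be the unique element of the orbit $\nu\hat S_k$ lying in $\mathcal{A}_{k,n}$. Then $$N^\lambda_{\mu\nu}=N^\lambda_{\mu\check\nu}\binom{m_n(\check\nu)}{m_0(\nu),m_n(\nu),m_{2n}(\nu),\dots}\prod_{i=1}^{n-1}\binom{m_i(\check\nu)}{m_i(\nu),m_{i+n}(\nu),m_{i+2n}(\nu),\dots}.$$
   Context: Fix $k,n\ge1$. $\mathcal{P}_k^+$ is the set of $\nu\in\mathbb{Z}^k$ with $\nu_1\ge\cdots\ge\nu_k\ge0$; each such $\nu$ is extended to $\nu:\mathbb{Z}\to\mathbb{Z}$ by $\nu_{i+k}=\nu_i-n$. $\mathcal{A}_{k,n}$ is the set of such functions with $n\ge\nu_1\ge\cdots\ge\nu_k>0$. $\hat S_k$ is the group of bijections of $\mathbb{Z}$ generated by $\tau(m)=m-1$ and $\sigma_i$ ($0\le i<k$; $\sigma_i(m)=m+1$ if $m\equiv i$, $m-1$ if $m\equiv i+1$, $m$ otherwise, mod $k$), acting by $(\nu\circ\hat w)_i=\nu_{\hat w(i)}$; $\mathcal{A}_{k,n}$ meets each orbit in exactly one point. $m_j(\nu)=\#\{i\in[k]:\nu_i=j\}$. For $\nu\in\mathbb{Z}^k$ and $w\in S_k$, $\nu\circ w=(\nu_{w(1)},\dots,\nu_{w(k)})$; $S_\nu$ is its stabiliser and $S^\nu$ the minimal length representatives of $S_\nu\backslash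 S_k$. For $\lambda,\mu\in\mathcal{A}_{k,n}$, $\nu\in\mathcal{P}_k^+$: $N^\lambda_{\mu\nu}=\#\{(w,w')\in S^\mu\times S^\nu:\mu\circ w+\nu\circ w'=(\lambda_1+n\alpha_1,\dots,\lambda_k+n\alpha_k)\text{ for some }\alpha\in\mathbb{Z}^k\text{ with }\sum\alpha_i=d\}$, where $d=(|\mu|+|\nu|-|\lambda|)/n$ and $|\cdot|$ is the sum of the $k$ entries (these are the coefficients of $h_\nu$ in the expansion of the cylindric complete symmetric function $h_{\lambda/d/\mu}$). *)

From mathcomp Require Import all_boot all_order all_algebra all_fingroup.
From mathcomp Require Import boolp.
Set Implicit Arguments. Unset Strict Implicit. Unset Printing Implicit Defensive.
Import Order.TTheory GRing.Theory Num.Theory.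
Local Open Scope ring_scope.

(* A vector nu in Z^k is a function 'I_k -> int; index i : 'I_k stands for
   the paper's index i+1 in [k] = {1,...,k}. *)

Definition inP (k : nat) (nu : 'I_k -> int) : Prop :=
  (forall i j : 'I_k, (i <= j)%N -> nu j <= nu i) /\ (forall i, 0 <= nu i).

Definition inA (k n : nat) (nu : 'I_k -> int) : Prop :=
  (forall i j : 'I_k, (i <= j)%N -> nu j <= nu i) /\
  (forall i, 0 < nu i /\ nu i <= n%:Z).

(* Extension of nu to Z -> Z with nu_{i+k} = nu_i - n (paper indexing:
   ext_aff nu i for i = 1..k is nu_i).  Writing i - 1 = q k + r, 0 <= r < k,
   ext_aff nu i = nu_{r+1} - q n. *)
Definition ext_aff (k n : nat) (nu : 'I_k -> int) (i : int) : int :=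
  let r := ((i - 1) %% k%:Z)%Z in
  let q := ((i - 1) %/ k%:Z)%Z in
  odflt 0 (omap nu (insub `|r|%N)) - q * n%:Z.

(* Generators of the extended affine symmetric group hat S_k *)
Definition tau (m : int) : int := m - 1.
Definition tauinv (m : int) : int := m + 1.
Definition sigma (k : nat) (i : nat) (m : int) : int :=
  if (k%:Z %| m - i%:Z)%Z then m + 1
  else if (k%:Z %| m - (i.+1)%:Z)%Z then m - 1
  else m.

Inductive gen := GTau | GTauInv | GSigma of nat.

Definition gen_ok (k : nat) (g : gen) : bool :=
  if g is GSigma i then (i < k)%N else true.

Definition gen_fun (k : nat) (g : gen) : int -> int :=
  match g with GTau => tau | GTauInv => tauinv | GSigma i => sigma k i end.

Definition word_fun (k : nat) (ws : seq gen) : int -> int :=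
  foldr (fun g f => (gen_fun k g) \o f) id ws.

Definition in_hatS (k : nat) (f : int -> int) : Prop :=
  exists ws : seq gen, all (gen_ok k) ws /\ f =1 word_fun k ws.

Definition in_aff_orbit (k n : nat) (nu rho : 'I_k -> int) : Prop :=
  exists w, in_hatS k w /\ forall i : int, ext_aff n rho i = ext_aff n nu (w i).

Definition mult_of (k : nat) (nu : 'I_k -> int) (j : int) : nat :=
  #|[pred i : 'I_k | nu i == j]|.

(* Coxeter length of w in S_k = number of inversions *)
Definition perm_length (k : nat) (w : 'S_k) : nat :=
  #|[pred p : 'I_k * 'I_k | (p.1 < p.2)%N && (w p.2 < w p.1)%N]|.

Definition vact (k : nat) (nu : 'I_k -> int) (w : 'S_k) : 'I_k -> int :=
  fun i => nu (w i).

Definition in_stab (k : nat) (nu : 'I_k -> int) (u : 'S_k) : bool :=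
  [forall i, vact nu u i == nu i].

(* w in S^nu : w has minimal length in its right coset S_nu w = {u o w}.
   In mathcomp, (w * u) x = u (w x), i.e. w * u is the composite u o w. *)
Definition in_minrep (k : nat) (nu : 'I_k -> int) (w : 'S_k) : bool :=
  [forall u : 'S_k, in_stab nu u ==> (perm_length w <= perm_length (w * u)%g)%N].

Definition vsum (k : nat) (nu : 'I_k -> int) : int := \sum_i nu i.

Definition Ncoef (k n : nat) (lam mu nu : 'I_k -> int) : nat :=
  #|[pred p : 'S_k * 'S_k |
      in_minrep mu p.1 && in_minrep nu p.2 &&
      `[< exists alpha : 'I_k -> int,
            (forall i, vact mu p.1 i + vact nu p.2 i = lam i + n%:Z * alpha i) /\
            n%:Z * vsum alpha = vsum mu + vsum nu - vsum lam >]]|.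

Definition multinom (N : nat) (s : seq nat) : nat :=
  (N`! %/ \prod_(x <- s) x`!)%N.

(* the sequence m_i(nu), m_{i+n}(nu), m_{i+2n}(nu), ...  (truncated after
   all entries are certainly 0: entries of nu in P_k^+ are <= |nu|) *)
Definition mult_seq (k n : nat) (nu : 'I_k -> int) (i : nat) : seq nat :=
  [seq mult_of nu (i + a * n)%N%:Z | a <- iota 0 (`|vsum nu|%N).+1].

(* Every right coset of the stabiliser S_nu in S_k has exactly one element of
   minimal length.  For nonincreasing nu the length of s splits as the number
   of ascents of nu o s, which only depends on the coset, plus the number of
   inversions of s between positions of equal value; a coset contains exactly
   one permutation without such inversions.  Hence for any condition F on w'
   that only depends on nu o w',
     #{w' in S^nu | F w'} * |S_nu| = #{w' in S_k | F w'}.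
   The condition defining N^lam_{mu nu} depends on nu o w' only modulo n, and
   an element of the affine group commutes with translation by k, so it
   permutes indices modulo k while shifting the values of the extended nu by
   multiples of n: nuc is a rearrangement of nu modulo n.  Therefore
     N^lam_{mu nu} |S_nu| = N^lam_{mu nuc} |S_nuc|,
   and as |S_nu| = prod_j m_j(nu)! and m_i(nuc) = sum_a m_{i+an}(nu), the
   ratio |S_nuc| / |S_nu| is the stated product of multinomial coefficients. *)

From mathcomp Require Import all_boot all_order all_algebra all_fingroup.
From mathcomp Require Import boolp zify.
Set Implicit Arguments. Unset Strict Implicit. Unset Printing Implicit Defensive.
Import Order.TTheory GRing.Theory Num.Theory.

Lemma card_pred_sum (T : finType) (P : pred T) : #|[pred x | P x]| = \sum_x P x.
Proof.
by rewrite -sum1_card big_mkcond; apply: eq_bigr => x _; rewrite inE; case: (P x).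
Qed.

Lemma card_ord_ltn k m : (m <= k)%N -> #|[pred j : 'I_k | (j < m)%N]| = m.
Proof.
move=> le_mk; have w_inj : injective (widen_ord le_mk).
  by move=> i j /(congr1 val) /= /ord_inj.
rewrite -[RHS]card_ord -(card_image w_inj).
apply: eq_card => j; rewrite inE.
apply/idP/mapP => [j_lt_m | [i _ ->]]; last exact: (ltn_ord i).
by exists (Ordinal j_lt_m); rewrite ?mem_enum //; apply: val_inj.
Qed.

Lemma card_perm_ltn k (s : 'S_k) x : #|[pred y | (s y < s x)%N]| = s x.
Proof.
rewrite -[LHS](card_image (@perm_inj _ s)) -[RHS](card_ord_ltn (ltnW (ltn_ord (s x)))).
apply: eq_card => j; rewrite inE; apply/mapP/idP => [[y y_lt ->] | j_lt].
  by rewrite mem_enum inE in y_lt.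
by exists (s^-1 j)%g; rewrite ?mem_enum ?inE permKV.
Qed.

Lemma lift_perm_fix0 k (u : 'S_k.+1) :
  u ord0 = ord0 -> exists s : 'S_k, u = lift_perm ord0 ord0 s.
Proof.
move=> u0.
have u_lift x : u (lift ord0 x) != ord0.
  by rewrite -{2}u0 (inj_eq perm_inj) eq_sym neq_lift.
pose h x := odflt x (unlift ord0 (u (lift ord0 x))).
have hE x : lift ord0 (h x) = u (lift ord0 x).
  by rewrite /h; case: unliftP (u_lift x) => [y ->|->]; rewrite ?eqxx.
have h_inj : injective h.
  by move=> x y /(congr1 (lift ord0)); rewrite !hE => /perm_inj /lift_inj.
exists (perm h_inj); apply/permP => x.
case: (unliftP ord0 x) => [y ->|->]; last by rewrite lift_perm_id.
by rewrite lift_perm_lift permE hE.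
Qed.

Local Open Scope ring_scope.

Lemma mult_of_recl k (f : 'I_k.+1 -> int) t :
  mult_of f t = ((f ord0 == t) + mult_of (fun i : 'I_k => f (lift ord0 i)) t)%N.
Proof. by rewrite /mult_of !card_pred_sum big_ord_recl. Qed.

Lemma in_stabP k (f : 'I_k -> int) (u : 'S_k) :
  reflect (forall x, f (u x) = f x) (in_stab f u).
Proof. by apply: (iffP forallP) => fu x; apply/eqP; apply: fu. Qed.

Lemma in_stabMr k (f : 'I_k -> int) (u v : 'S_k) :
  in_stab f v -> in_stab f (u * v)%g = in_stab f u.
Proof.
move/in_stabP=> fv; apply/in_stabP/in_stabP => fu x; last by rewrite permM fv fu.
by rewrite -(fu x) permM fv.
Qed.

Lemma in_stab_tperm k (f : 'I_k -> int) i j : f i = f j -> in_stab f (tperm i j).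
Proof. by move=> fij; apply/in_stabP => x; case: tpermP => // ->. Qed.

Lemma in_stab_lift k (f : 'I_k.+1 -> int) (s : 'S_k) :
  in_stab f (lift_perm ord0 ord0 s) = in_stab (fun i : 'I_k => f (lift ord0 i)) s.
Proof.
apply/in_stabP/in_stabP => fs x.
  by have := fs (lift ord0 x); rewrite lift_perm_lift.
case: (unliftP ord0 x) => [y ->|->]; last by rewrite lift_perm_id.
by rewrite lift_perm_lift; apply: fs.
Qed.

Lemma card_stab_fix0 k (f : 'I_k.+1 -> int) :
  #|[pred u : 'S_k.+1 | in_stab f u && (u ord0 == ord0)]| =
  #|[pred s : 'S_k | in_stab (fun i : 'I_k => f (lift ord0 i)) s]|.
Proof.
have lift_inj : injective (lift_perm (@ord0 k) ord0).
  move=> s t /permP st; apply/permP => x.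
  by have := st (lift ord0 x); rewrite !lift_perm_lift => /lift_inj.
rewrite -(card_image lift_inj); apply: eq_card => u; rewrite inE.
apply/andP/mapP => [[fu /eqP /lift_perm_fix0 [s u_s]] | [s]].
  by exists s; rewrite // mem_enum inE -in_stab_lift -u_s.
by rewrite mem_enum inE -in_stab_lift => fs ->; rewrite lift_perm_id.
Qed.

Lemma card_stab_fiber k (f : 'I_k.+1 -> int) (j : 'I_k.+1) :
  #|[pred u : 'S_k.+1 | in_stab f u && (u ord0 == j)]| =
  ((f j == f ord0) * #|[pred u : 'S_k.+1 | in_stab f u && (u ord0 == ord0)]|)%N.
Proof.
have [fj0|fj0] := eqVneq (f j) (f ord0); last first.
  rewrite mul0n; apply: eq_card0 => u; rewrite !inE.
  by apply: contraNF fj0 => /andP[/in_stabP/(_ ord0) <- /eqP ->].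
have stab_t : in_stab f (tperm ord0 j) by apply: in_stab_tperm.
rewrite mul1n -[RHS](card_image (mulIg (tperm ord0 j))); apply: eq_card => u.
rewrite inE; apply/andP/mapP => [[fu /eqP u0] | [v]].
  exists (u * tperm ord0 j)%g; last by rewrite -mulgA tperm2 mulg1.
  by rewrite mem_enum inE in_stabMr // fu permM u0 tpermR.
rewrite mem_enum inE => /andP[fv /eqP v0] ->.
by rewrite in_stabMr // permM v0 tpermL.
Qed.

Lemma card_stab k (f : 'I_k -> int) (s : seq int) :
  uniq s -> (forall i, f i \in s) ->
  #|[pred u : 'S_k | in_stab f u]| = (\prod_(t <- s) (mult_of f t)`!)%N.
Proof.
elim: k f => [|k IHk] f s_uniq f_s.
  rewrite big1_seq => [|t _]; last by rewrite /mult_of card_pred_sum big_ord0.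
  rewrite -[1%N]/(0`!) -card_Sn; apply: eq_card => u.
  by rewrite !inE; apply/forallP => -[].
have -> : (\prod_(t <- s) (mult_of f t)`! = mult_of f (f ord0) *
           \prod_(t <- s) (mult_of (fun i : 'I_k => f (lift ord0 i)) t)`!)%N.
  rewrite !(bigD1_seq (f ord0)) //= mult_of_recl eqxx add1n factS -mulnA.
  congr (_ * (_ * _))%N.
  by apply: eq_bigr => t ft; rewrite mult_of_recl eq_sym (negbTE ft).
rewrite -IHk // -card_stab_fix0 -sum1_card.
rewrite (partition_big (fun u : 'S_k.+1 => u ord0) xpredT) //=.
under eq_bigr => j _ do rewrite sum1_card card_stab_fiber.
by rewrite -big_distrl /= -card_pred_sum.
Qed.

Section MinimalCosetRepresentatives.

Variables (k : nat) (nu : 'I_k -> int).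
Hypothesis nu_noninc : forall i j : 'I_k, (i <= j)%N -> nu j <= nu i.

Definition ascents (b : 'I_k -> int) :=
  #|[pred p : 'I_k * 'I_k | (p.1 < p.2)%N && (b p.1 < b p.2)]|.

Definition level_inv (s : 'S_k) :=
  #|[pred p : 'I_k * 'I_k |
     (p.1 < p.2)%N && (s p.2 < s p.1)%N && (nu (s p.1) == nu (s p.2))]|.

Lemma noninc_ltE (x y : 'I_k) : ((y < x)%N && (nu x != nu y)) = (nu x < nu y).
Proof.
have [y_lt_x|x_le_y] /= := ltnP y x; last by apply/esym/negbTE; rewrite -leNgt nu_noninc.
by rewrite lt_def eq_sym nu_noninc 1?ltnW // andbT.
Qed.

Lemma perm_length_split s : perm_length s = (ascents (vact nu s) + level_inv s)%N.
Proof.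
rewrite /perm_length -(cardID [pred p : 'I_k * 'I_k | nu (s p.1) == nu (s p.2)]) addnC.
congr (_ + _)%N; apply: eq_card => p; rewrite !inE /vact -(noninc_ltE (s p.1) (s p.2)).
by case: (nu _ != _); case: (p.1 < p.2)%N; case: (s _ < s _)%N.
Qed.

Definition weight (s : 'S_k) := (\sum_(i : 'I_k) i * s i)%N.

Lemma weight_tperm (a b : 'I_k) (s : 'S_k) :
  (a < b)%N -> (s b < s a)%N -> (weight s < weight (tperm a b * s))%N.
Proof.
move=> a_lt_b sb_lt_sa; have a_neq_b : a != b by rewrite neq_ltn a_lt_b.
have sumE (F : 'I_k -> nat) :
    (\sum_i F i = F a + (F b + \sum_(i | (i != a) && (i != b)) F i))%N.
  by rewrite (bigD1 a) // (bigD1 b) 1?eq_sym.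
rewrite /weight !sumE !permM tpermL tpermR.
under [X in (_ < _ + (_ + X))%N]eq_bigr => i /andP[ia ib]
  do rewrite permM tpermD 1?eq_sym //.
move: (\sum_(i | _) _)%N a_lt_b sb_lt_sa => R.
move: (a : nat) (b : nat) (s a : nat) (s b : nat) => x y u v xy vu.
have : (0 < (y - x) * (u - v))%N by rewrite muln_gt0 !subn_gt0 xy vu.
nia.
Qed.

Definition same_coset (s t : 'S_k) := [forall i, nu (s i) == nu (t i)].

Lemma same_cosetP (s t : 'S_k) : reflect (forall i, nu (s i) = nu (t i)) (same_coset s t).
Proof. by apply: (iffP forallP) => st i; apply/eqP; apply: st. Qed.

Lemma exists_level_inv0 (s : 'S_k) : exists2 s0, same_coset s0 s & level_inv s0 = 0%N.
Proof.
have s_s : same_coset s s by apply/same_cosetP.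
have [s0 s0s max_s0] := @arg_maxnP _ s [pred t | same_coset t s] weight s_s.
exists s0 => //; apply/eqP; rewrite -leqn0 leqNgt; apply/negP => /card_gt0P [p].
rewrite inE => /andP[/andP[p12 sp21] /eqP nu_p].
have : same_coset (tperm p.1 p.2 * s0) s.
  by apply/same_cosetP => i; rewrite permM -(same_cosetP _ _ s0s); case: tpermP => // ->.
by move/max_s0; apply/negP; rewrite -ltnNge weight_tperm.
Qed.

Lemma ascents_same_coset (s t : 'S_k) :
  same_coset s t -> ascents (vact nu s) = ascents (vact nu t).
Proof. by move/same_cosetP=> st; apply: eq_card => p; rewrite !inE /vact !st. Qed.

Lemma minrep_level_inv0 (s : 'S_k) : in_minrep nu s -> level_inv s = 0%N.
Proof.
move=> /forallP s_min; have [s0 s0s s0_inv0] := exists_level_inv0 s.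
have stab_u : in_stab nu (s^-1 * s0)%g.
  by apply/in_stabP => i; rewrite permM (same_cosetP _ _ s0s) permKV.
have := implyP (s_min _) stab_u; rewrite mulKVg !perm_length_split s0_inv0.
by rewrite (ascents_same_coset s0s) leq_add2l leqn0 => /eqP.
Qed.

Lemma level_inv0_pos (s : 'S_k) x : level_inv s = 0%N ->
  s x = #|[pred y | (nu (s x) < nu (s y)) || (nu (s y) == nu (s x)) && (y < x)%N]| :> nat.
Proof.
move=> /card0_eq s_inv0; rewrite -card_perm_ltn; apply: eq_card => y; rewrite !inE.
have [nu_xy|nu_xy] /= := eqVneq (nu (s y)) (nu (s x)); last first.
  by rewrite orbF -(noninc_ltE (s x) (s y)) eq_sym nu_xy andbT.
rewrite nu_xy ltxx /=.
have [y_lt_x|x_lt_y|/val_inj ->] := ltngtP y x; last by rewrite ltnn.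
  have := s_inv0 (y, x); rewrite !inE /= y_lt_x nu_xy eqxx andbT => /negbT.
  rewrite -leqNgt leq_eqVlt => /orP[/eqP/val_inj/perm_inj y_x|//].
  by rewrite y_x ltnn in y_lt_x.
by have := s_inv0 (x, y); rewrite !inE /= x_lt_y nu_xy eqxx andbT.
Qed.

Lemma level_inv0_inj (s t : 'S_k) :
  level_inv s = 0%N -> level_inv t = 0%N -> same_coset s t -> s = t.
Proof.
move=> s_inv0 t_inv0 /same_cosetP st; apply/permP => x; apply/val_inj.
rewrite /= (level_inv0_pos x s_inv0) (level_inv0_pos x t_inv0).
by apply: eq_card => y; rewrite !inE !st.
Qed.

Definition min_rep (s : 'S_k) : 'S_k := [arg min_(t < s | same_coset t s) perm_length t].

Lemma min_repP (s : 'S_k) : in_minrep nu (min_rep s) /\ same_coset (min_rep s) s.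
Proof.
rewrite /min_rep; case: arg_minnP => [|r rs min_r]; first exact/same_cosetP.
split=> //; apply/forallP => u; apply/implyP => /in_stabP stab_u; apply: min_r.
by apply/same_cosetP => i; rewrite permM stab_u; apply/same_cosetP.
Qed.

Lemma card_same_coset (w : 'S_k) :
  #|[pred s | same_coset s w]| = #|[pred u | in_stab nu u]|.
Proof.
rewrite -[RHS](card_image (mulgI w)); apply: eq_card => s; rewrite inE.
apply/idP/mapP => [sw | [u]]; last first.
  rewrite mem_enum inE => /in_stabP stab_u ->.
  by apply/same_cosetP => i; rewrite permM stab_u.
exists (w^-1 * s)%g; last by rewrite mulKVg.
by rewrite mem_enum inE; apply/in_stabP => i; rewrite permM (same_cosetP _ _ sw) permKV.
Qed.

Lemma card_minrep_stab (F : pred 'S_k) :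
  (forall s t, same_coset s t -> F s = F t) ->
  (#|[pred w | in_minrep nu w && F w]| * #|[pred u | in_stab nu u]|)%N =
  #|[pred w | F w]|.
Proof.
move=> F_coset; rewrite -[RHS]sum1_card.
rewrite (partition_big min_rep [pred w | in_minrep nu w && F w]) /=; last first.
  by move=> s Fs; have [-> /F_coset ->] := min_repP s.
rewrite -sum1_card big_distrl /=; apply: eq_bigr => w /andP[w_min Fw].
rewrite mul1n sum1_card -(card_same_coset w); apply: eq_card => s.
rewrite !inE unfold_in /= inE.
have [s_min ss] := min_repP s.
apply/idP/andP => [sw | [_ /eqP <-]]; last first.
  by apply/same_cosetP => i; rewrite (same_cosetP _ _ ss).
split; first by rewrite (F_coset _ _ sw).
apply/eqP/level_inv0_inj; rewrite ?minrep_level_inv0 //.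
by apply/same_cosetP => i; rewrite (same_cosetP _ _ ss) (same_cosetP _ _ sw).
Qed.

End MinimalCosetRepresentatives.

Section AffineSymmetricGroup.

Variable k : nat.

Definition sigma_inv (i : nat) (m : int) : int :=
  if (k%:Z %| m - i.+1%:Z)%Z then m - 1
  else if (k%:Z %| m - i%:Z)%Z then m + 1
  else m.

Lemma sigmaK i : cancel (sigma k i) (sigma_inv i).
Proof.
move=> m; rewrite /sigma /sigma_inv.
have [k_m_i|k_m_i] := boolP (k%:Z %| m - i%:Z)%Z.
  by rewrite (_ : m + 1 - i.+1%:Z = m - i%:Z) ?k_m_i ?addrK //; lia.
have [k_m_i1|k_m_i1] := boolP (k%:Z %| m - i.+1%:Z)%Z; last first.
  by rewrite (negbTE k_m_i1) (negbTE k_m_i).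
rewrite (_ : m - 1 - i%:Z = m - i.+1%:Z) ?k_m_i1 ?subrK; last by lia.
case: ifP => // k_m_i2; case/negP: k_m_i.
have := rpredB k_m_i1 k_m_i2; rewrite (_ : _ - _ = 1); last by lia.
by rewrite dvdz1 => /eqP k1; rewrite (_ : k = 1%N) ?dvd1z.
Qed.

Lemma sigmaD i m : sigma k i (m + k%:Z) = sigma k i m + k%:Z.
Proof.
have dvdD j : (k%:Z %| m + k%:Z - j)%Z = (k%:Z %| m - j)%Z.
  by rewrite addrAC rpredDr ?dvdzz.
by rewrite /sigma !dvdD; case: ifP => _; [|case: ifP => _]; rewrite // addrAC.
Qed.

Lemma word_fun_inj ws : injective (word_fun k ws).
Proof.
elim: ws => [|[| |i] ws IHws] //= x y /=.
- by move/addIr/IHws.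
- by move/addIr/IHws.
- by move/(can_inj (sigmaK i))/IHws.
Qed.

Lemma word_funD ws m : word_fun k ws (m + k%:Z) = word_fun k ws m + k%:Z.
Proof.
elim: ws => [|[| |i] ws IHws] //=; rewrite IHws ?sigmaD //.
- by rewrite /tau addrAC.
- by rewrite /tauinv addrAC.
Qed.

Lemma in_hatS_inj w : in_hatS k w -> injective w.
Proof. by case=> ws [_ w_ws] x y; rewrite !w_ws => /word_fun_inj. Qed.

Lemma in_hatS_shift w :
  in_hatS k w -> forall x (q : int), w (x + q * k%:Z) = w x + q * k%:Z.
Proof.
case=> ws [_ w_ws] x q; rewrite !w_ws.
have wD y : word_fun k ws (y - k%:Z) = word_fun k ws y - k%:Z.
  by rewrite -{2}(subrK k%:Z y) word_funD addrK.
elim/int_rec: q => [|q IHq|q IHq]; rewrite ?mul0r ?addr0 //.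
  rewrite (_ : x + _ = x + q%:Z * k%:Z + k%:Z) ?word_funD ?IHq; lia.
rewrite (_ : x + _ = x - q%:Z * k%:Z - k%:Z) ?wD -?mulNr ?IHq; lia.
Qed.

End AffineSymmetricGroup.

Section AffineExtension.

Variables (k n : nat) (nu : 'I_k.+1 -> int).

Lemma modz_ord (x : int) : (`|(x %% k.+1)%Z|%N < k.+1)%N.
Proof.
by have := modz_ge0 x (isT : k.+1%:Z != 0); have := ltz_pmod x (isT : 0 < k.+1%:Z); lia.
Qed.

Lemma ext_affE x :
  ext_aff n nu x = nu (inord `|((x - 1) %% k.+1)%Z|) - ((x - 1) %/ k.+1)%Z * n%:Z.
Proof.
rewrite /ext_aff insubT ?modz_ord //= => lt.
by congr (nu _ - _); apply/val_inj; rewrite /= inordK.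
Qed.

Lemma ext_aff_ord (j : 'I_k.+1) : ext_aff n nu (j%:Z + 1) = nu j.
Proof.
have j_lt := ltn_ord j.
rewrite ext_affE addrK modz_small ?divz_small; try by apply/andP; split; lia.
by rewrite mul0r subr0 /=; congr nu; apply/val_inj; rewrite /= inordK.
Qed.

Lemma ext_aff_shift x (q : int) :
  ext_aff n nu (x + q * k.+1%:Z) = ext_aff n nu x - q * n%:Z.
Proof.
rewrite !ext_affE addrAC -(addrC (q * _)) modzMDl divzMDl //.
by rewrite mulrDl opprD addrA addrAC.
Qed.

End AffineExtension.

Lemma residue_perm k (w : int -> int) :
  injective w -> (forall x (q : int), w (x + q * k.+1%:Z) = w x + q * k.+1%:Z) ->
  exists pi : 'S_k.+1, forall j : 'I_k.+1, exists q : int, w j = (pi j)%:Z + q * k.+1%:Z.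
Proof.
move=> w_inj w_shift; pose r (j : 'I_k.+1) : 'I_k.+1 := inord `|(w j %% k.+1)%Z|.
have rE j : (r j)%:Z = (w j %% k.+1)%Z.
  by rewrite /r inordK ?modz_ord // gez0_abs // modz_ge0.
have r_inj : injective r.
  move=> j1 j2 r12; apply/ord_inj/eqP; rewrite -eqz_nat; apply/eqP.
  have := divz_eq (w j1) k.+1; have := divz_eq (w j2) k.+1; rewrite -!rE r12 => w_j2 w_j1.
  have : w j1 = w (j2%:Z + ((w j1 %/ k.+1)%Z - (w j2 %/ k.+1)%Z) * k.+1%:Z).
    by rewrite w_shift; lia.
  move/w_inj; move: (_ - _)%R => q j12.
  have := ltn_ord j1; have := ltn_ord j2; case: (ltrgt0P q) => [q_gt0|q_lt0|q0]; nia.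
by exists (perm r_inj) => j; exists (w j %/ k.+1)%Z; rewrite permE rE addrC -divz_eq.
Qed.

Lemma aff_orbit_perm k n (nu rho : 'I_k -> int) : (0 < k)%N -> in_aff_orbit n nu rho ->
  exists pi : 'S_k, forall j, (n%:Z %| rho j - nu (pi j))%Z.
Proof.
case: k nu rho => // k nu rho _ [w [w_hatS w_rho]].
(* Conjugating by the shift turns the 1-based indices of [ext_aff] into 'I_k. *)
pose w' x := w (x + 1) - 1.
have w'_inj : injective w' by move=> x y /addIr /(in_hatS_inj w_hatS) /addIr.
have w'_shift x (q : int) : w' (x + q * k.+1%:Z) = w' x + q * k.+1%:Z.
  by rewrite /w' addrAC (in_hatS_shift w_hatS) addrAC.
have [pi pi_w] := residue_perm w'_inj w'_shift.
exists pi => j; have [q w_j] := pi_w j.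
rewrite -(ext_aff_ord n rho) w_rho (_ : w _ = (pi j)%:Z + 1 + q * k.+1%:Z); last first.
  by move: w_j; rewrite /w' => /eqP; rewrite subr_eq => /eqP ->; rewrite addrAC.
by rewrite ext_aff_shift ext_aff_ord addrAC subrr add0r rpredN dvdz_mull.
Qed.

Lemma prod_fact_dvd (s : seq nat) : (\prod_(x <- s) x`! %| (\sum_(x <- s) x)`!)%N.
Proof.
elim: s => [|a s IHs]; rewrite ?big_nil // !big_cons.
apply: dvdn_trans (dvdn_mul (dvdnn _) IHs) _.
by rewrite -(bin_fact (leq_addr (\sum_(x <- s) x) a)) addKn dvdn_mull.
Qed.

Lemma multinomK (N : nat) (s : seq nat) : N = (\sum_(x <- s) x)%N ->
  (multinom N s * \prod_(x <- s) x`!)%N = N`!.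
Proof. by rewrite /multinom => ->; rewrite divnK // prod_fact_dvd. Qed.

Section Coefficients.

Variables (k n : nat) (lam mu : 'I_k -> int).

Definition admissible (nu : 'I_k -> int) (w w' : 'S_k) :=
  [forall i, (n%:Z %| mu (w i) + nu (w' i) - lam i)%Z].

Lemma vsum_vact (f : 'I_k -> int) (w : 'S_k) : vsum (vact f w) = vsum f.
Proof. by rewrite /vsum [RHS](reindex_inj (@perm_inj _ w)). Qed.

Lemma Ncoef_admissible (nu : 'I_k -> int) (w w' : 'S_k) :
  `[< exists alpha : 'I_k -> int,
      (forall i, vact mu w i + vact nu w' i = lam i + n%:Z * alpha i) /\
      n%:Z * vsum alpha = vsum mu + vsum nu - vsum lam >] = admissible nu w w'.
Proof.
apply/asboolP/forallP => [[alpha [w_alpha _]] i | adm].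
  by apply/dvdzP; exists (alpha i); rewrite /vact in w_alpha; rewrite w_alpha; lia.
(* The constraint on [vsum alpha] follows from the pointwise ones. *)
pose alpha i := ((mu (w i) + nu (w' i) - lam i) %/ n%:Z)%Z.
have alphaE i : n%:Z * alpha i = mu (w i) + nu (w' i) - lam i by rewrite mulrC divzK.
exists alpha; split=> [i|]; first by rewrite alphaE /vact; lia.
rewrite /vsum mulr_sumr; under eq_bigr do rewrite alphaE.
by rewrite sumrB big_split /= -!/(vsum _) -(vsum_vact mu w) -(vsum_vact nu w').
Qed.

Lemma Ncoef_sum (nu : 'I_k -> int) : Ncoef n lam mu nu =
  (\sum_(w | in_minrep mu w) #|[pred w' | in_minrep nu w' && admissible nu w w']|)%N.
Proof.
rewrite /Ncoef -sum1_card; under [RHS]eq_bigr do rewrite -sum1_card.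
rewrite pair_big_dep /=; apply: eq_bigl => -[w w'].
by rewrite !inE Ncoef_admissible andbA.
Qed.

Lemma Ncoef_mul_stab (nu : 'I_k -> int) :
  (forall i j : 'I_k, (i <= j)%N -> nu j <= nu i) ->
  (Ncoef n lam mu nu * #|[pred u | in_stab nu u]|)%N =
  (\sum_(w | in_minrep mu w) #|[pred w' | admissible nu w w']|)%N.
Proof.
move=> nu_noninc; rewrite Ncoef_sum big_distrl /=; apply: eq_bigr => w _.
apply: (card_minrep_stab nu_noninc) => s t /same_cosetP st.
by apply: eq_forallb => i; rewrite st.
Qed.

Lemma card_admissible_congr (nu rho : 'I_k -> int) (pi : 'S_k) (w : 'S_k) :
  (forall j, (n%:Z %| rho j - nu (pi j))%Z) ->
  #|[pred w' | admissible rho w w']| = #|[pred w' | admissible nu w w']|.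
Proof.
move=> rho_nu; rewrite -!sum1_card [RHS](reindex_inj (mulIg pi)) /=.
apply: eq_bigl => s; rewrite !inE; apply: eq_forallb => i; rewrite permM.
rewrite (_ : _ - lam i = mu (w i) + nu (pi (s i)) - lam i + (rho (s i) - nu (pi (s i))));
  by rewrite 1?rpredDr //; lia.
Qed.

Lemma Ncoef_mul_stab_congr (nu rho : 'I_k -> int) (pi : 'S_k) :
  (forall i j : 'I_k, (i <= j)%N -> nu j <= nu i) ->
  (forall i j : 'I_k, (i <= j)%N -> rho j <= rho i) ->
  (forall j, (n%:Z %| rho j - nu (pi j))%Z) ->
  (Ncoef n lam mu nu * #|[pred u | in_stab nu u]|)%N =
  (Ncoef n lam mu rho * #|[pred u | in_stab rho u]|)%N.
Proof.
move=> nu_noninc rho_noninc rho_nu; rewrite !Ncoef_mul_stab //.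
by apply: eq_bigr => w _; rewrite (card_admissible_congr _ rho_nu).
Qed.

End Coefficients.

Section Multiplicities.

Variables (k n : nat).

Lemma card_residue_congr (nu rho : 'I_k -> int) (pi : 'S_k) (r : int) :
  (forall j, (n%:Z %| rho j - nu (pi j))%Z) ->
  #|[pred j | (n%:Z %| rho j - r)%Z]| = #|[pred j | (n%:Z %| nu j - r)%Z]|.
Proof.
move=> rho_nu; rewrite -!sum1_card [RHS](reindex_inj (@perm_inj _ pi)) /=.
apply: eq_bigl => j; rewrite !inE.
by rewrite (_ : rho j - r = nu (pi j) - r + (rho j - nu (pi j))) 1?rpredDr //; lia.
Qed.

Lemma mult_of_inA (nuc : 'I_k -> int) (i : nat) : inA n nuc -> (0 < i <= n)%N ->
  mult_of nuc i%:Z = #|[pred j | (n%:Z %| nuc j - i%:Z)%Z]|.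
Proof.
move=> [_ nuc_range] /andP[i_gt0 i_le_n]; apply: eq_card => j; rewrite !inE.
have [nuc_gt0 nuc_le_n] := nuc_range j.
apply/eqP/idP => [-> | /dvdzP [q nuc_j]]; first by rewrite subrr dvdz0.
have q0 : q = 0 by nia.
by move: nuc_j; rewrite q0 mul0r => /eqP; rewrite subr_eq0 => /eqP.
Qed.

Lemma le_vsum (nu : 'I_k -> int) j : inP nu -> nu j <= vsum nu.
Proof. by move=> [_ nu_ge0]; rewrite /vsum (bigD1 j) //= lerDl sumr_ge0. Qed.

Lemma card_residue_inP (nu : 'I_k -> int) (i : nat) : (0 < n)%N -> inP nu -> (i < n)%N ->
  #|[pred j | (n%:Z %| nu j - i%:Z)%Z]| = (\sum_(x <- mult_seq n nu i) x)%N.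
Proof.
move=> n_gt0 nu_P i_lt_n; rewrite /mult_seq big_map card_pred_sum.
under [RHS]eq_bigr do rewrite /mult_of card_pred_sum.
rewrite exchange_big /=; apply: eq_bigr => j _.
have := le_vsum j nu_P; have [_ /(_ j)] := nu_P; case: (nu j) => // v _ v_le.
have [/dvdzP [q v_i] | not_dvd] := boolP (n%:Z %| v%:Z - i%:Z)%Z; last first.
  rewrite big1_seq // => a _; apply/eqP; rewrite eqb0; apply: contra not_dvd.
  by rewrite eqz_nat => /eqP ->; apply/dvdzP; exists a%:Z; lia.
have q_ge0 : 0 <= q by nia.
have v_eq : v = (i + `|q|%N * n)%N by lia.
have q_in : `|q|%N \in iota 0 (`|vsum nu|%N).+1.
  by rewrite mem_iota /= add0n ltnS; nia.
rewrite (bigD1_seq _ q_in (iota_uniq _ _)) /= -v_eq eqxx big1_seq ?addn0 //.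
move=> a /andP[a_neq_q _]; rewrite v_eq eqz_nat eqn_add2l eqn_pmul2r //.
by rewrite eq_sym (negbTE a_neq_q).
Qed.

Lemma card_stab_inP (nu : 'I_k -> int) : (0 < n)%N -> inP nu ->
  #|[pred u | in_stab nu u]| = (\prod_(0 <= i < n) \prod_(x <- mult_seq n nu i) x`!)%N.
Proof.
move=> n_gt0 nu_P; set A := (`|vsum nu|%N).+1.
rewrite (@card_stab _ _ [seq (i + a * n)%N%:Z | i <- iota 0 n, a <- iota 0 A]).
- rewrite big_allpairs_dep /index_iota subn0.
  by apply: eq_bigr => i _; rewrite /mult_seq big_map.
- apply: allpairs_uniq; rewrite ?iota_uniq // => p1 p2.
  move=> /allpairsP[[i1 a1] [i1_lt _ ->]] /allpairsP[[i2 a2] [i2_lt _ ->]] /= /eqP.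
  rewrite mem_iota in i1_lt; rewrite mem_iota in i2_lt.
  rewrite eqz_nat => /eqP i_eq; have i12 : i1 = i2.
    have := congr1 (modn^~ n) i_eq.
    by rewrite /= ![(_ + _ * n)%N]addnC !modnMDl !modn_small.
  by move: i_eq; rewrite i12 => /addnI/eqP; rewrite eqn_pmul2r // => /eqP ->.
- move=> j; have := le_vsum j nu_P; have [_ /(_ j)] := nu_P; case: (nu j) => // v _ v_le.
  apply/allpairsP; exists (v %% n, v %/ n)%N; split.
  + by rewrite mem_iota add0n ltn_pmod.
  + by rewrite mem_iota add0n /A ltnS; apply: leq_trans (leq_div _ _) _; lia.
  + by rewrite /= addnC -divn_eq.
Qed.

Lemma card_stab_inA (nuc : 'I_k -> int) : inA n nuc ->
  #|[pred u | in_stab nuc u]| = (\prod_(1 <= i < n.+1) (mult_of nuc i%:Z)`!)%N.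
Proof.
move=> [_ nuc_range]; rewrite (@card_stab _ _ [seq i%:Z | i <- iota 1 n]).
- by rewrite big_map /index_iota subSS subn0.
- by rewrite map_inj_uniq ?iota_uniq // => x y [].
- move=> j; have [] := nuc_range j; case: (nuc j) => // v v_gt0 v_le.
  by apply/mapP; exists v => //; rewrite mem_iota; lia.
Qed.

Lemma mult_of_residue (nu nuc : 'I_k -> int) (pi : 'S_k) (i : nat) :
  (0 < n)%N -> inP nu -> inA n nuc -> (forall j, (n%:Z %| nuc j - nu (pi j))%Z) ->
  (0 < i <= n)%N -> mult_of nuc i%:Z = (\sum_(x <- mult_seq n nu (i %% n)) x)%N.
Proof.
move=> n_gt0 nu_P nuc_A nuc_nu i_range.
rewrite mult_of_inA // (card_residue_congr _ nuc_nu) -card_residue_inP ?ltn_pmod //.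
apply: eq_card => j; rewrite !inE.
rewrite (_ : nu j - i%:Z = nu j - (i %% n)%N%:Z - (i %/ n * n)%N%:Z); last first.
  by rewrite {1}(divn_eq i n); lia.
by rewrite rpredBr // PoszM dvdz_mull.
Qed.

Lemma card_stab_congr (nu nuc : 'I_k -> int) (pi : 'S_k) :
  (0 < n)%N -> inP nu -> inA n nuc -> (forall j, (n%:Z %| nuc j - nu (pi j))%Z) ->
  #|[pred u | in_stab nuc u]| =
    (multinom (mult_of nuc n%:Z) (mult_seq n nu 0)
     * \prod_(1 <= i < n) multinom (mult_of nuc i%:Z) (mult_seq n nu i)
     * #|[pred u | in_stab nu u]|)%N.
Proof.
move=> n_gt0 nu_P nuc_A nuc_nu.
have fact_mult i : (0 < i <= n)%N -> (mult_of nuc i%:Z)`! =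
    (multinom (mult_of nuc i%:Z) (mult_seq n nu (i %% n))
     * \prod_(x <- mult_seq n nu (i %% n)) x`!)%N.
  by move=> i_range; rewrite multinomK // (mult_of_residue _ _ _ nuc_nu).
rewrite card_stab_inA // card_stab_inP // big_nat_recr //= (big_ltn n_gt0) /= mulnC.
rewrite fact_mult ?n_gt0 ?leqnn // modnn mulnACA; congr (_ * _)%N.
rewrite -big_split; apply: eq_big_nat => i /andP[i_gt0 i_lt_n].
by rewrite fact_mult ?modn_small // i_gt0 ltnW.
Qed.

End Multiplicities.

Unset Implicit Arguments.

Theorem mainTheorem10 (k n : nat) (hk : (0 < k)%N) (hn : (0 < n)%N)
    (lam mu nu nuc : 'I_k -> int) :
  inA n lam -> inA n mu -> inP nu ->
  inA n nuc -> in_aff_orbit n nu nuc ->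
  Ncoef n lam mu nu =
    (Ncoef n lam mu nuc
     * multinom (mult_of nuc n%:Z) (mult_seq n nu 0)
     * \prod_(1 <= i < n) multinom (mult_of nuc i%:Z) (mult_seq n nu i))%N.
Proof.
move=> _ _ nu_P nuc_A /(aff_orbit_perm hk) [pi nuc_nu].
have stab_gt0 : (0 < #|[pred u | in_stab nu u]|)%N.
  by apply/card_gt0P; exists 1%g; rewrite inE; apply/in_stabP => i; rewrite perm1.
apply/eqP; rewrite -(eqn_pmul2r stab_gt0).
rewrite (Ncoef_mul_stab_congr _ _ nu_P.1 nuc_A.1 nuc_nu).
by rewrite (card_stab_congr hn nu_P nuc_A nuc_nu) !mulnA.
Qed.
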